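(* Let $(G=(V,E),w,k)$ be an instance of the Min-WED problem such that $0\le\min\{\min\{w(x):x\in V\},k\}$. Let $M=\max\{\sum_{x\in V}w(x),k\}+1$, let $w'(x)=M\cdot|N_G[x]|-w(x)$ for all $x\in V$, and let $k'=M\cdot|V|-k$. Then $(G,w,k)$ is a yes instance of the Min-WED problem if and only if $(G^2,w',k')$ is a yes instance of the MWIS problem.
   Context: All graphs are finite, simple and undirected. $N_G[x]$ is the closed neighborhood of $x$ in $G$ (the neighbors of $x$ together with $x$). A vertex dominates itself and its neighbors. An efficient dominating set of $G=(V,E)$ is a set $D\subseteq V$ such that every vertex of $V$ is dominated by exactly one vertex of $D$. The square $G^2=(V,E^2)$ has distinct $u,v$ adjacent iff $uv\in E$ or $u,v$ have a common neighbor in $G$. Min-WED: given $G=(V,E)$, $w:V\to\mathbb{Z}$ and an integer $k$, decide whether $G$ has an efficient dominating set $D$ with $\sum_{x\in D}w(x)\le k$. MWIS: given a graph $H$, weights $w':V(H)\to\mathbb{Z}$ and an integer $k'$, decide whether $H$ has an independent set $I$ with $\sum_{x\in I}w'(x)\ge k'$. *)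

From mathcomp Require Import all_boot all_order all_algebra.
Set Implicit Arguments. Unset Strict Implicit. Unset Printing Implicit Defensive.
Import Order.TTheory GRing.Theory Num.Theory.
Local Open Scope ring_scope.

Definition simple_graph (T : finType) (e : rel T) : Prop :=
  symmetric e /\ irreflexive e.

Definition closed_nbhd (T : finType) (e : rel T) (x : T) : {set T} :=
  [set y | (y == x) || e x y].

Definition efficient_dominating (T : finType) (e : rel T) (D : {set T}) : Prop :=
  forall v : T, #|[set d in D | v \in closed_nbhd e d]| = 1%N.

Definition sq_rel (T : finType) (e : rel T) : rel T :=
  fun u v => (u != v) && (e u v || [exists z, e u z && e z v]).

Definition independent (T : finType) (h : rel T) (I : {set T}) : Prop :=
  forall u v, u \in I -> v \in I -> ~~ h u v.

Definition minWED_yes (T : finType) (e : rel T) (w : T -> int) (k : int) : Prop :=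
  exists D : {set T}, efficient_dominating e D /\ \sum_(x in D) w x <= k.

Definition MWIS_yes (T : finType) (h : rel T) (w' : T -> int) (k' : int) : Prop :=
  exists I : {set T}, independent h I /\ k' <= \sum_(x in I) w' x.

(* Count how often each vertex is dominated by a set D: summing over all
   vertices gives the sum over D of |N[d]|.  D is independent in G^2 exactly
   when no vertex is dominated twice, and efficient exactly when every vertex
   is dominated once.  Hence for an independent set I of G^2 the weight
   w'(I) = M * (number of dominations) - w(I) equals M|V| - w(I) if I is
   efficient and is at most M(|V| - 1) otherwise; since M > k >= 0, the latter
   never reaches k' = M|V| - k, while the former does iff w(I) <= k. *)

From mathcomp Require Import all_boot all_order all_algebra.
From mathcomp Require Import zify.
Import Order.TTheory GRing.Theory Num.Theory.
Set Implicit Arguments. Unset Strict Implicit. Unset Printing Implicit Defensive.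
Local Open Scope ring_scope.

Lemma sum_le1_lt_card (T : finType) (f : T -> nat) (v : T) :
  (forall u, f u <= 1)%N -> f v = 0%N -> (\sum_u f u < #|T|)%N.
Proof.
move=> f_le1 fv0; rewrite (bigD1 v) //= fv0 add0n.
apply: (@leq_ltn_trans (\sum_(u | u != v) 1)); first exact: leq_sum.
rewrite sum1_card (eq_card (B := predC1 v)) // cardC1 ltn_predL.
by apply/card_gt0P; exists v.
Qed.

Definition dom_count (T : finType) (e : rel T) (D : {set T}) (v : T) : nat :=
  #|[set d in D | v \in closed_nbhd e d]|.

Section Domination.

Variables (T : finType) (e : rel T).

Lemma sum_card_closed_nbhd (D : {set T}) :
  (\sum_(d in D) #|closed_nbhd e d| = \sum_v dom_count e D v)%N.
Proof.
rewrite /dom_count; under eq_bigr do rewrite -sum1_card.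
under [RHS]eq_bigr do rewrite -sum1_card.
rewrite (exchange_big_dep predT) //=.
by apply: eq_bigr => v _; apply: eq_bigl => d; rewrite !inE.
Qed.

Lemma sum_dom_count_efficient (D : {set T}) :
  efficient_dominating e D -> (\sum_v dom_count e D v)%N = #|T|.
Proof.
by move=> effD; rewrite (eq_bigr (fun _ => 1%N)) ?sum1_card // => v _; apply: effD.
Qed.

Lemma sum_closed_nbhd_weight (M : int) (w : T -> int) (D : {set T}) :
  \sum_(x in D) (M * (#|closed_nbhd e x|)%:Z - w x) =
  M * (\sum_v dom_count e D v)%:Z - \sum_(x in D) w x.
Proof.
rewrite sumrB -mulr_sumr -sum_card_closed_nbhd -natz natr_sum.
by under eq_bigr do rewrite natz.
Qed.

Hypothesis e_sym : symmetric e.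

Lemma sq_rel_common_nbhd u v :
  sq_rel e u v =
  (u != v) && [exists z, (z \in closed_nbhd e u) && (z \in closed_nbhd e v)].
Proof.
rewrite /sq_rel; case: eqVneq => //= uv; apply/idP/existsP.
  case/orP=> [euv | /existsP[z /andP[euz ezv]]].
    by exists v; rewrite !inE eqxx euv orbT.
  by exists z; rewrite !inE euz e_sym ezv !orbT.
case=> z; rewrite !inE => /andP[/orP[/eqP zu | euz] /orP[/eqP zv | evz]].
- by rewrite -zu -zv eqxx in uv.
- by rewrite -zu e_sym evz.
- by rewrite -zv euz.
- by apply/orP; right; apply/existsP; exists z; rewrite euz e_sym evz.
Qed.

Lemma independent_sq_dom_count (D : {set T}) :
  independent (sq_rel e) D <-> forall v, (dom_count e D v <= 1)%N.
Proof.
split=> [indD v | le1 u v uD vD].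
  apply/card_le1_eqP => d1 d2; rewrite !inE => /andP[d1D vd1] /andP[d2D vd2].
  apply/eqP/negPn/negP => d12; case/negP: (indD _ _ d1D d2D).
  rewrite sq_rel_common_nbhd eq_sym d12.
  by apply/existsP; exists v; rewrite !inE vd1.
rewrite sq_rel_common_nbhd negb_and negbK orbC.
case: existsP => //= -[z /andP[uz vz]].
by apply/eqP/(card_le1_eqP (le1 z)); rewrite in_set; apply/andP.
Qed.

End Domination.

Lemma count_deficit_ltr (M s k : int) (S n : nat) :
  0 <= k -> k < M -> 0 <= s -> (S < n)%N -> M * S%:Z - s < M * n%:Z - k.
Proof. by move=> *; nia. Qed.

Theorem lemma5 (T : finType) (e : rel T) (w : T -> int) (k : int) :
  simple_graph e ->
  (forall x : T, 0 <= w x) -> 0 <= k ->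
  let M : int := Num.max (\sum_(x : T) w x) k + 1 in
  let w' : T -> int := fun x => M * (#|closed_nbhd e x|)%:Z - w x in
  let k' : int := M * (#|T|)%:Z - k in
  minWED_yes e w k <-> MWIS_yes (sq_rel e) w' k'.
Proof.
move=> [e_sym _] w_ge0 k_ge0 M w' k'.
have k_lt_M : k < M by rewrite ltzD1 le_max lexx orbT.
have weight_dom (D : {set T}) : \sum_(x in D) w' x =
    M * (\sum_v dom_count e D v)%:Z - \sum_(x in D) w x.
  exact: sum_closed_nbhd_weight.
split=> [[D [effD wD]] | [I [indI wI]]].
  exists D; split.
    by apply/independent_sq_dom_count => // v; rewrite /dom_count effD.
  by rewrite weight_dom sum_dom_count_efficient // lerD2l lerN2.
have le1 := (independent_sq_dom_count e_sym I).1 indI.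
have effI : efficient_dominating e I.
  move=> v; apply/eqP; rewrite eqn_leq le1 lt0n; apply/negP => /eqP c0.
  move: wI; rewrite weight_dom; apply/negP; rewrite -ltNge.
  apply: count_deficit_ltr => //; first exact: sumr_ge0.
  exact: sum_le1_lt_card c0.
exists I; split => //.
by move: wI; rewrite weight_dom sum_dom_count_efficient // lerD2l lerN2.
Qed.
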